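(* Consider the CoDGraD iteration described below. Assume that ${\bf A}_{\rm sde}$ has $1$ as a simple eigenvalue and all other eigenvalues in the open unit disk, and that there is $L>0$ with $\|\nabla g_i({\bf x})-\nabla g_i({\bf y})\|_2\le L\|{\bf x}-{\bf y}\|_2$ for all ${\bf x},{\bf y}\in\mathbb{R}^N$, $1\le i\le n$. Then for every $k\ge0$, $$\Big\|\sum_{i=1}^n(a_i-a_{n+i})\nabla g_i({\bf x}_i(k))-\tilde w\,\nabla f(\bar{\bf x}(k))\Big\|_2\le L\Big(\sum_{i=1}^{2n}|a_i|\Big)\max_{1\le i\le n}\|{\bf x}_i(k)-\bar{\bf x}(k)\|_2.$$
   Context: Setting: $f_1,\dots,f_m:\mathbb{R}^N\to\mathbb{R}$, $f=\sum_l f_l$; ${\bf B}=(b(i,l))$ real $n\times m$, ${\bf A}=(a(i,j))$ real $n\times n$ with ${\bf A}{\bf B}={\bf 1}_{n\times m}$ (all-ones); $g_i=\sum_l b(i,l)f_l$ differentiable (so $f=\sum_j a(i,j)g_j$ for each $i$). Let $t_+=\max(t,0)$, $w_i=\big(\sum_j|a(i,j)|\big)^{-1}$, $\tilde a(i,j)=w_ia(i,j)$, $\tilde{\bf A}_\pm=\big((\pm\tilde a(i,j))_+\big)$, ${\bf A}_{\rm sde}=\begin{pmatrix}\tilde{\bf A}_+&\tilde{\bf A}_-\\ \tilde{\bf A}_+&\tilde{\bf A}_-\end{pmatrix}$. CoDGraD iteration: positive step sizes $\alpha_k$, arbitrary ${\bf x}_i(0)\in\mathbb{R}^N$, and for $k\ge0$: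 ${\bf y}_i^\pm(k)={\bf x}_i(k)\mp\alpha_k\nabla g_i({\bf x}_i(k))$, ${\bf x}_i(k+1)=\sum_{j=1}^n w_i\{(a(i,j))_+{\bf y}_j^+(k)+(-a(i,j))_+{\bf y}_j^-(k)\}$. Let ${\bf a}_{\rm sde}=(a_1,\dots,a_{2n})^T$ be the unique vector with ${\bf a}_{\rm sde}^T{\bf A}_{\rm sde}={\bf a}_{\rm sde}^T$ and $\sum_i a_i=1$; $\bar{\bf x}(k)=\sum_{i=1}^n(a_i+a_{n+i}){\bf x}_i(k)$; $\tilde w=\sum_{i=1}^n(a_i+a_{n+i})w_i$. *)

From HB Require Import structures.
From mathcomp Require Import all_boot all_order all_algebra.
From mathcomp Require Import complex.
From mathcomp Require Import all_classical all_reals all_analysis.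
Set Implicit Arguments. Unset Strict Implicit. Unset Printing Implicit Defensive.
Import Order.TTheory GRing.Theory Num.Theory.
Import numFieldNormedType.Exports.
Local Open Scope ring_scope.

Definition norm2 (R : realType) (N : nat) (v : 'rV[R]_N) : R :=
  Num.sqrt (\sum_(k < N) v 0 k ^+ 2).

Definition grad (R : realType) (N : nat) (f : 'rV[R]_N -> R^o) (x : 'rV[R]_N)
  : 'rV[R]_N := \row_(k < N) ('d f x (delta_mx 0 k) : R).

Definition ppart (R : realType) (t : R) : R := Num.max t 0.

Definition wgt (R : realType) (n : nat) (A : 'M[R]_n) (i : 'I_n) : R :=
  (\sum_(j < n) `|A i j|)^-1.

Definition Atp (R : realType) (n : nat) (A : 'M[R]_n) : 'M[R]_n :=
  \matrix_(i, j) ppart (wgt A i * A i j).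
Definition Atm (R : realType) (n : nat) (A : 'M[R]_n) : 'M[R]_n :=
  \matrix_(i, j) ppart (- (wgt A i * A i j)).

Definition Asde (R : realType) (n : nat) (A : 'M[R]_n) : 'M[R]_(n + n) :=
  block_mx (Atp A) (Atm A) (Atp A) (Atm A).

Definition simple_one_rest_in_disk (R : realType) (p : nat) (M : 'M[R]_p) : Prop :=
  let Mc := map_mx (fun r : R => (r%:C)%C) M in
  mup 1 (char_poly Mc) = 1%N /\
  forall lam : R[i], eigenvalue Mc lam -> lam != 1 -> `|lam| < 1.

Definition gfun (R : realType) (N n m : nat) (B : 'M[R]_(n, m))
  (fl : 'I_m -> 'rV[R]_N -> R) (i : 'I_n) : 'rV[R]_N -> R^o :=
  fun x => \sum_(l < m) B i l * fl l x.

Definition ffun_sum (R : realType) (N m : nat) (fl : 'I_m -> 'rV[R]_N -> R)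
  : 'rV[R]_N -> R^o := fun x => \sum_(l < m) fl l x.

Definition codgrad_iter (R : realType) (N n m : nat) (A : 'M[R]_n) (B : 'M[R]_(n, m))
  (fl : 'I_m -> 'rV[R]_N -> R) (alpha : nat -> R) (x : nat -> 'I_n -> 'rV[R]_N) : Prop :=
  forall k i,
    x k.+1 i =
      \sum_(j < n) wgt A i *:
        (ppart (A i j) *: (x k j - alpha k *: grad (gfun B fl j) (x k j))
         + ppart (- A i j) *: (x k j + alpha k *: grad (gfun B fl j) (x k j))).

(* Since A B = 1, f = sum_j a(i,j) g_j for every row i, so grad f is the same
   combination of the grad g_j.  Stationarity of a under A_sde, together with
   t_+ - (-t)_+ = t, gives a_j - a_{n+j} = sum_i (a_i + a_{n+i}) w_i a(i,j);
   averaging the rows with weights (a_i + a_{n+i}) w_i therefore turns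
   w~ grad f(xbar) into sum_j (a_j - a_{n+j}) grad g_j(xbar).  What remains is
   the triangle inequality and the Lipschitz bound, term by term. *)
From HB Require Import structures.
From mathcomp Require Import all_boot all_order all_algebra.
From mathcomp Require Import complex.
From mathcomp Require Import all_classical all_reals all_analysis.
From mathcomp Require Import ring lra.
Set Implicit Arguments. Unset Strict Implicit. Unset Printing Implicit Defensive.
Import Order.TTheory GRing.Theory Num.Theory.
Import numFieldNormedType.Exports.
Local Open Scope ring_scope.

Section EuclideanNorm.
Variable R : realType.

Lemma cauchy_schwarz_sum (I : finType) (u v : I -> R) :
  (\sum_i u i * v i) ^+ 2 <= (\sum_i u i ^+ 2) * (\sum_i v i ^+ 2).
Proof.
have lagrange : 2 * ((\sum_i u i ^+ 2) * (\sum_i v i ^+ 2) - (\sum_i u i * v i) ^+ 2)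
    = \sum_i \sum_j (u i * v j - u j * v i) ^+ 2.
  have -> : \sum_i \sum_j (u i * v j - u j * v i) ^+ 2 =
      \sum_i \sum_j u i ^+ 2 * v j ^+ 2 + \sum_i \sum_j v i ^+ 2 * u j ^+ 2
      - 2 * \sum_i \sum_j u i * v i * (u j * v j).
    rewrite -!big_split mulr_sumr -sumrB; apply: eq_bigr => i _.
    rewrite -!big_split mulr_sumr -sumrB /=; apply: eq_bigr => j _; ring.
  by rewrite -!big_distrlr /= expr2; ring.
have : 0 <= \sum_i \sum_j (u i * v j - u j * v i) ^+ 2.
  by do 2!(apply: sumr_ge0 => ? _); exact: sqr_ge0.
rewrite -lagrange; lra.
Qed.

Variable N : nat.
Implicit Types u v : 'rV[R]_N.

Lemma norm2_ge0 v : 0 <= norm2 v.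
Proof. exact: sqrtr_ge0. Qed.

Lemma sqr_norm2 v : norm2 v ^+ 2 = \sum_k v 0 k ^+ 2.
Proof. by rewrite sqr_sqrtr // sumr_ge0 // => k _; exact: sqr_ge0. Qed.

Lemma norm2_0 : norm2 (0 : 'rV[R]_N) = 0.
Proof. by rewrite /norm2 big1 ?sqrtr0 // => k _; rewrite mxE expr0n. Qed.

Lemma norm2Z (c : R) v : norm2 (c *: v) = `|c| * norm2 v.
Proof.
rewrite /norm2 (eq_bigr (fun k => c ^+ 2 * v 0 k ^+ 2)) => [|k _]; last first.
  by rewrite mxE exprMn.
by rewrite -mulr_sumr sqrtrM ?sqr_ge0 // sqrtr_sqr.
Qed.

Lemma norm2D u v : norm2 (u + v) <= norm2 u + norm2 v.
Proof.
have [u0 v0] := (norm2_ge0 u, norm2_ge0 v).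
rewrite -ler_sqr ?nnegrE ?addr_ge0 ?norm2_ge0 // sqrrD !sqr_norm2.
have dot_le : \sum_k u 0 k * v 0 k <= norm2 u * norm2 v.
  apply: le_trans (ler_norm _) _.
  rewrite -ler_sqr ?nnegrE ?mulr_ge0 // real_normK ?num_real //.
  by rewrite exprMn !sqr_norm2 cauchy_schwarz_sum.
rewrite (eq_bigr (fun k => u 0 k ^+ 2 + v 0 k ^+ 2 + (u 0 k * v 0 k) *+ 2)).
  by rewrite !big_split /=; lra.
by move=> k _; rewrite mxE sqrrD; ring.
Qed.

Lemma norm2_sum (I : finType) (c : I -> R) (w : I -> 'rV[R]_N) :
  norm2 (\sum_i c i *: w i) <= \sum_i `|c i| * norm2 (w i).
Proof.
apply: (big_ind2 (fun v r => norm2 v <= r)); first by rewrite norm2_0.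
  by move=> ? ? ? ? le1 le2; apply: le_trans (norm2D _ _) (lerD le1 le2).
by move=> i _; rewrite norm2Z.
Qed.

End EuclideanNorm.

Section Gradient.
Variable R : realType.

Lemma diff_sum (V W : normedModType R) (n : nat) (F : 'I_n -> V -> W) (y v : V) :
  (forall j, differentiable (F j) y) ->
  'd (\sum_(j < n) F j) y v = \sum_(j < n) 'd (F j) y v.
Proof.
elim: n F => [|n IH] F dF; first by rewrite !big_ord0 (_ : 0 = cst 0) // diff_cst.
rewrite !big_ord_recr /= diffD //= ?IH //.
exact: differentiable_sum.
Qed.

Lemma grad_sum (N n : nat) (c : 'I_n -> R) (F : 'I_n -> 'rV[R]_N -> R^o) y :
  (forall j, differentiable (F j) y) ->
  grad (\sum_(j < n) c j *: F j) y = \sum_(j < n) c j *: grad (F j) y.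
Proof.
move=> dF; apply/rowP => k; rewrite !mxE summxE diff_sum => [|j].
  by apply: eq_bigr => j _; rewrite diffZ // !mxE.
exact: differentiableZ.
Qed.

End Gradient.

Lemma ppartBN (R : realType) (t : R) : ppart t - ppart (- t) = t.
Proof.
by rewrite /ppart /Order.max /=; case: (ltrP t 0) => ?; case: (ltrP (- t) 0) => ?; lra.
Qed.

Lemma Asde_halvesB (R : realType) (n : nat) (A : 'M[R]_n) (a : 'rV[R]_(n + n))
    (j : 'I_n) :
  (a *m Asde A) 0 (lshift n j) - (a *m Asde A) 0 (rshift n j)
  = \sum_i (a 0 (lshift n i) + a 0 (rshift n i)) * (wgt A i * A i j).
Proof.
rewrite !mxE !big_split_ord /= opprD addrACA -!sumrB -big_split /=.
apply: eq_bigr => i _.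
rewrite /Asde block_mxEul block_mxEdl block_mxEur block_mxEdr !mxE.
by rewrite -[X in _ = _ * X]ppartBN; ring.
Qed.

Section Objective.
Variables (R : realType) (N n m : nat).
Variables (fl : 'I_m -> 'rV[R]_N -> R) (B : 'M[R]_(n, m)) (A : 'M[R]_n).
Hypothesis hAB : A *m B = const_mx 1.
Hypothesis hdiff : forall i x, differentiable (gfun B fl i) x.

Lemma ffun_sum_gfun i : ffun_sum fl = \sum_j A i j *: gfun B fl j.
Proof.
apply/funext => z; rewrite fct_sumE /ffun_sum /gfun.
transitivity (\sum_j A i j * \sum_l B j l * fl l z); last by [].
under [RHS]eq_bigr do rewrite mulr_sumr.
rewrite exchange_big /=; apply: eq_bigr => l _.
have ABil : \sum_j A i j * B j l = 1.
  by have := congr1 (fun M : 'M[R]_(n, m) => M i l) hAB; rewrite !mxE.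
by rewrite -[LHS]mul1r -ABil mulr_suml; apply: eq_bigr => j _; rewrite mulrA.
Qed.

Lemma grad_ffun_sum i y :
  grad (ffun_sum fl) y = \sum_j A i j *: grad (gfun B fl j) y.
Proof. by rewrite (ffun_sum_gfun i) grad_sum. Qed.

Lemma Asde_weighted_grad_ffun_sum (a : 'rV[R]_(n + n)) y :
  a *m Asde A = a ->
  (\sum_i (a 0 (lshift n i) + a 0 (rshift n i)) * wgt A i) *: grad (ffun_sum fl) y
  = \sum_j (a 0 (lshift n j) - a 0 (rshift n j)) *: grad (gfun B fl j) y.
Proof.
move=> a_fix; rewrite scaler_suml.
under eq_bigr => i _ do rewrite (grad_ffun_sum i) scaler_sumr.
rewrite exchange_big /=; apply: eq_bigr => j _.
have := Asde_halvesB A a j; rewrite a_fix => ->; rewrite scaler_suml.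
by apply: eq_bigr => i _; rewrite scalerA mulrA.
Qed.

End Objective.

Theorem proposition5 (R : realType) (N n m : nat)
  (fl : 'I_m -> 'rV[R]_N -> R) (B : 'M[R]_(n, m)) (A : 'M[R]_n)
  (hAB : A *m B = const_mx 1)
  (hdiff : forall (i : 'I_n) (x : 'rV[R]_N), differentiable (gfun B fl i) x)
  (alpha : nat -> R) (halpha : forall k, 0 < alpha k)
  (x : nat -> 'I_n -> 'rV[R]_N) (hiter : codgrad_iter A B fl alpha x)
  (a : 'rV[R]_(n + n))
  (ha_fix : a *m Asde A = a) (ha_sum : \sum_(i < n + n) a 0 i = 1)
  (hspec : simple_one_rest_in_disk (Asde A))
  (L : R) (hL : 0 < L)
  (hLip : forall (i : 'I_n) (y z : 'rV[R]_N),
     norm2 (grad (gfun B fl i) y - grad (gfun B fl i) z) <= L * norm2 (y - z)) :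
  let xbar := fun k => \sum_(i < n) (a 0 (lshift n i) + a 0 (rshift n i)) *: x k i in
  let wt := \sum_(i < n) (a 0 (lshift n i) + a 0 (rshift n i)) * wgt A i in
  forall k : nat,
    norm2 (\sum_(i < n) (a 0 (lshift n i) - a 0 (rshift n i)) *: grad (gfun B fl i) (x k i)
           - wt *: grad (ffun_sum fl) (xbar k))
    <= L * (\sum_(i < n + n) `|a 0 i|) * \big[Num.max/0]_(i < n) norm2 (x k i - xbar k).
Proof.
move=> xbar wt k; set M := \big[Num.max/0]_(i < n) _.
have lip j : norm2 (grad (gfun B fl j) (x k j) - grad (gfun B fl j) (xbar k)) <= L * M.
  by apply: le_trans (hLip _ _ _) _; rewrite ler_pM2l // le_bigmax.
rewrite (Asde_weighted_grad_ffun_sum hAB hdiff _ ha_fix) -sumrB.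
under eq_bigr do rewrite -scalerBr.
apply: le_trans (norm2_sum _ _) _.
apply: (@le_trans _ _ (\sum_j (`|a 0 (lshift n j)| + `|a 0 (rshift n j)|) * (L * M))).
  by apply: ler_sum => j _; apply: ler_pM; rewrite ?normr_ge0 ?norm2_ge0 ?ler_normB.
by rewrite big_split_ord /= -big_split -mulr_suml mulrCA mulrA.
Qed.
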